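(* Let $p$ be prime, $\mathbb{F}=\mathbb{F}_p$, $n\ge1$. Let $r_1,\dots,r_n$ be chosen uniformly and independently from $\mathbb{F}^N$. For each nonzero sequence $\kappa=(k_1,\dots,k_n)$ with $0\le k_i<p$, let $X_\kappa=\sum_{j=1}^N\prod_{i=1}^nr_i(j)^{k_i}$, and let $X=(X_\kappa)_\kappa\in\mathbb{F}^{K}$, $K=p^n-1$. Let $P$ be the distribution of $X$ and $U$ the uniform distribution on $\mathbb{F}^K$. Then there are constants $c>0$ and $N_0$ depending on $n,p$ but not on $N$ such that for all $N\ge N_0$, $$\|P-U\|_1\le\exp\{-cN\}.$$
   Context: $\|\cdot\|_1$ is the statistical ($\ell_1$) distance between distributions on $\mathbb{F}^K$; $r(j)$ is the $j$-th coordinate of $r$. *)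

From HB Require Import structures.
From mathcomp Require Import all_boot all_order all_algebra.
From mathcomp Require Import all_classical all_reals all_analysis.
Set Implicit Arguments. Unset Strict Implicit. Unset Printing Implicit Defensive.
Import Order.TTheory GRing.Theory Num.Theory.
Local Open Scope ring_scope.

Definition kidx (n p : nat) :=
  {k : {ffun 'I_n -> 'I_p} | [exists i, (k i : nat) != 0%N]}.

(* The random input: r_1,...,r_n in F^N, r i j = r_{i+1}(j+1). *)
Definition inputs (p n N : nat) := {ffun 'I_n -> {ffun 'I_N -> 'F_p}}.

(* X_kappa = sum_j prod_i r_i(j)^{k_i}  (with 0^0 = 1). *)
Definition Xvec (p n N : nat) (r : inputs p n N) : {ffun kidx n p -> 'F_p} :=
  [ffun k : kidx n p => (\sum_(j < N) \prod_(i < n) (r i j) ^+ (val k i : nat) : 'F_p)].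

Definition distP (R : realType) (p n N : nat) (x : {ffun kidx n p -> 'F_p}) : R :=
  (#|[set r : inputs p n N | Xvec r == x]|)%:R / (#|{: inputs p n N}|)%:R.

Definition distU (R : realType) (p n : nat) (x : {ffun kidx n p -> 'F_p}) : R :=
  1 / (#|{: {ffun kidx n p -> 'F_p}}|)%:R.

Definition l1dist_PU (R : realType) (p n N : nat) : R :=
  \sum_(x : {ffun kidx n p -> 'F_p}) `|distP R N x - distU R x|.

From HB Require Import structures.
From mathcomp Require Import all_boot all_order all_algebra all_field.
From mathcomp Require Import all_classical all_reals all_analysis.
From mathcomp Require Import ring lra.
Set Implicit Arguments. Unset Strict Implicit. Unset Printing Implicit Defensive.
Import Order.TTheory GRing.Theory Num.Theory.
Local Open Scope ring_scope.

(* X is the position after N steps of a random walk on F^K whose step is the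
   vector v(y) = (prod_i y_i^{k_i})_kappa of a uniform y in F^n.  Lagrange
   interpolation on F^n makes the monomials a basis of the functions F^n -> F,
   so the moment map c |-> (sum_y c(y) y^kappa)_kappa is a bijection and every
   point of F^K is a combination sum_y c(y) v(y) with 0 <= c(y) < p.  Since
   v(0) = 0, such a point is reached in exactly m = p^n p steps with probability
   at least p^{-nm}.  This Doeblin minorization shrinks the l1 distance to the
   uniform law by the factor 1 - p^K p^{-nm} < 1 every m steps. *)

Section ExponentialDecay.
Variable R : realType.

Lemma expR_eventually_ge (C L : R) : 0 < L ->
  exists b : nat, forall k : nat, (b <= k)%N -> C <= expR (L * k%:R).
Proof.
move=> L0; pose b := Num.Def.archi_bound (`|C| / L).
have hb : `|C| / L < b%:R by apply: archi_boundP; rewrite divr_ge0 // ltW.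
exists b => k hk.
have CL : C <= L * k%:R.
  rewrite (le_trans (ler_norm C)) // -ler_pdivrMl // mulrC.
  by rewrite (le_trans (ltW hb)) // ler_nat.
by rewrite (le_trans CL) // (le_trans _ (expR_ge1Dx _)) // lerDr.
Qed.

Lemma contraction_iter (u : nat -> R) (m : nat) (t : R) :
  0 <= t -> (forall N M, u (N + M)%N <= u N) -> (forall N, u (N + m)%N <= t * u N) ->
  forall N, u N <= t ^+ (N %/ m) * u 0.
Proof.
move=> t_ge0 u_nonincr u_contract N.
rewrite {1}(divn_eq N m); apply: le_trans (u_nonincr _ _) _.
elim: (N %/ m)%N => [|k IH]; first by rewrite mul0n expr0 mul1r.
rewrite mulSnr exprS -mulrA (le_trans (u_contract _)) //.
by rewrite ler_wpM2l.
Qed.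

Lemma exp_decay_of_contraction (u : nat -> R) (m : nat) (t : R) :
  (0 < m)%N -> 0 <= t -> t < 1 -> (forall N, 0 <= u N) ->
  (forall N M, u (N + M)%N <= u N) -> (forall N, u (N + m)%N <= t * u N) ->
  exists c : R, 0 < c /\ exists N0 : nat, forall N : nat, (N0 <= N)%N ->
    u N <= expR (- (c * N%:R)).
Proof.
move=> m_gt0 t_ge0 t_lt1 u_ge0 u_nonincr u_contract.
pose s := (1 + t) / 2; have s_gt0 : 0 < s by rewrite /s; lra.
pose L := - ln s.
have L_gt0 : 0 < L by rewrite /L oppr_gt0; apply: ln_lt0; rewrite s_gt0 /s; lra.
have m_gt0R : (0 : R) < m%:R by rewrite ltr0n.
have [b hb] := @expR_eventually_ge (u 0) (L / 2) (divr_gt0 L_gt0 (ltr0Sn _ 1)).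
exists (L / (4 * m%:R)); split; first by rewrite divr_gt0 ?mulr_gt0.
exists (b.+1 * m)%N => N hN; set k := (N %/ m)%N.
have hk : (b.+1 <= k)%N by rewrite /k -(mulnK b.+1 m_gt0) leq_div2r.
have t_k : t ^+ k <= expR (- (L * k%:R)).
  have -> : - (L * k%:R) = k%:R * ln s by rewrite /L; ring.
  rewrite expRM_natl lnK ?posrE //.
  by apply: lerXn2r; rewrite ?nnegrE ?(ltW s_gt0) // /s; lra.
(* [N < (k + 1) m <= 2 k m], since [k >= 1]. *)
have N_le : (N <= 2 * k * m)%N.
  rewrite -mulnA mul2n -addnn (leq_trans (ltnW (ltn_ceil N m_gt0))) //.
  by rewrite mulSn leq_add2r leq_pmull // (leq_trans _ hk).
have cN : L / (4 * m%:R) * N%:R <= L / 2 * k%:R.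
  have N_leR : (N%:R : R) <= 2 * k%:R * m%:R by rewrite -!natrM ler_nat.
  rewrite -(ler_pM2r m_gt0R).
  have -> : L / (4 * m%:R) * N%:R * m%:R = L / 4 * N%:R.
    by field; rewrite pnatr_eq0 -lt0n.
  nra.
rewrite (le_trans (contraction_iter t_ge0 u_nonincr u_contract N)) // -/k.
rewrite (le_trans (ler_wpM2r (u_ge0 0) t_k)) //.
rewrite (le_trans (ler_wpM2l (ltW (expR_gt0 _)) (hb k (ltnW hk)))) //.
by rewrite -expRD ler_expR; lra.
Qed.

End ExponentialDecay.

Section RandomWalk.
Variables (R : realType) (G : finZmodType) (W : finType) (v : W -> G).

Fixpoint walk (N : nat) (x : G) : R :=
  if N is N'.+1 then (\sum_(y : W) walk N' (x - v y)) / #|W|%:R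
  else (x == 0)%:R.

Definition tvdist (N : nat) : R := \sum_(x : G) `|walk N x - #|G|%:R^-1|.

Definition nat_span_below (b : nat) : Prop :=
  forall x : G, exists c : W -> nat, (forall y, c y < b)%N /\ x = \sum_y v y *+ c y.

Lemma walk_ge0 N x : 0 <= walk N x.
Proof.
elim: N x => [|N IH] x /=; first by rewrite ler0n.
by rewrite divr_ge0 ?sumr_ge0.
Qed.

Lemma sumr_subr (f : G -> R) (a : G) : \sum_(x : G) f (x - a) = \sum_x f x.
Proof. by rewrite [RHS](reindex_inj (addIr (- a))). Qed.

Lemma sumr_rsubr (f : G -> R) (a : G) : \sum_(x : G) f (a - x) = \sum_x f x.
Proof. by rewrite [RHS](reindex_inj (inj_comp (addrI a) (@oppr_inj _))). Qed.

Variable w0 : W.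

Lemma card_steps_gt0 : 0 < #|W|%:R :> R.
Proof. by rewrite ltr0n; apply/card_gt0P; exists w0. Qed.

Lemma sum_walk N : \sum_x walk N x = 1.
Proof.
elim: N => [|N IH] /=.
  by rewrite (bigD1 0) //= eqxx big1 ?addr0 // => x /negbTE ->.
rewrite -mulr_suml exchange_big /=.
under eq_bigr do rewrite sumr_subr IH.
by rewrite sumr_const mulfV // gt_eqF // card_steps_gt0.
Qed.

Lemma walkD N M x : walk (N + M) x = \sum_z walk N z * walk M (x - z).
Proof.
elim: M x => [|M IH] x /=.
  rewrite addn0 (bigD1 x) //= subrr eqxx mulr1 big1 ?addr0 // => z nz.
  by rewrite subr_eq0 eq_sym (negbTE nz) mulr0.
rewrite addnS /=; under eq_bigr do rewrite IH.
rewrite exchange_big mulr_suml; apply: eq_bigr => z _.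
by rewrite mulrA mulr_sumr; congr (_ * _); apply: eq_bigr => y _; rewrite addrAC.
Qed.

Hypothesis v_w0 : v w0 = 0.

Lemma walk_sum_steps M (s : seq W) : (size s <= M)%N ->
  (#|W|%:R ^+ M)^-1 <= walk M (\sum_(y <- s) v y).
Proof.
have walkS_ge M' x y a : a <= walk M' (x - v y) -> a / #|W|%:R <= walk M'.+1 x.
  move=> ax; rewrite /= ler_wpM2r ?invr_ge0 ?ler0n // (le_trans ax) //.
  by rewrite (bigD1 y) //= lerDl sumr_ge0 // => ? _; apply: walk_ge0.
elim: M s => [|M IH] [|y s] //= s_size; first by rewrite big_nil eqxx expr0 invr1.
  rewrite exprSr invfM; apply: (walkS_ge _ _ w0); rewrite v_w0 subr0.
  by have := IH [::] (leq0n M); rewrite big_nil.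
rewrite big_cons exprSr invfM; apply: (walkS_ge _ _ y).
by rewrite addrC addKr; apply: IH.
Qed.

Lemma walk_ge_span b : nat_span_below b ->
  forall x, (#|W|%:R ^+ (#|W| * b))^-1 <= walk (#|W| * b) x.
Proof.
move=> span x; have [c [c_lt ->]] := span x; rewrite -big_enum /=.
have [s [s_size <-]] : exists s : seq W,
    (size s <= size (enum W) * b)%N /\ \sum_(y <- s) v y = \sum_(y <- enum W) v y *+ c y.
  elim: (enum W) => [|a l [s [hs es]]]; first by exists [::]; rewrite !big_nil.
  exists (nseq (c a) a ++ s); split.
    by rewrite size_cat size_nseq mulSn leq_add // ltnW.
  rewrite big_cat big_cons es; congr (_ + _).
  by elim: (c a) => [|k IH]; rewrite ?big_nil //= big_cons IH mulrS.
by apply: walk_sum_steps; rewrite cardE.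
Qed.

Lemma tvdist_contract N M a : 0 <= a -> (forall x, a <= walk M x) ->
  tvdist (N + M) <= (1 - #|G|%:R * a) * tvdist N.
Proof.
move=> a_ge0 a_le; set u : R := #|G|%:R^-1.
have sum_u : \sum_(x : G) u = 1.
  by rewrite sumr_const -mulr_natl mulfV // pnatr_eq0 -lt0n; apply/card_gt0P; exists 0.
(* Subtracting [a] from the second factor is free since [walk N - u] has total mass 0. *)
have walkD_centered x : walk (N + M) x - u = \sum_z (walk N z - u) * (walk M (x - z) - a).
  under eq_bigr do rewrite mulrBr !mulrBl.
  rewrite !sumrB -!mulr_suml -mulr_sumr sumr_rsubr !sum_walk sum_u.
  by rewrite walkD; ring.
rewrite /tvdist; under eq_bigr do rewrite walkD_centered.
apply: le_trans (ler_sum _ (fun x _ => ler_norm_sum _ _ _)) _.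
rewrite exchange_big mulr_sumr /=; apply: ler_sum => z _.
under eq_bigr do rewrite normrM (ger0_norm (x := _ - a)) ?subr_ge0 //.
rewrite -mulr_sumr mulrC ler_wpM2r //.
by rewrite sumrB sumr_subr sum_walk sumr_const mulr_natl.
Qed.

Theorem tvdist_exp_decay b : nat_span_below b ->
  exists c : R, 0 < c /\ exists N0 : nat, forall N : nat, (N0 <= N)%N ->
    tvdist N <= expR (- (c * N%:R)).
Proof.
move=> span; set m := (#|W| * b)%N; set a : R := (#|W|%:R ^+ m)^-1.
have a_gt0 : 0 < a by rewrite invr_gt0 exprn_gt0 ?card_steps_gt0.
have minor := walk_ge_span span.
have m_gt0 : (0 < m)%N.
  have [c [c_lt _]] := span 0.
  rewrite /m muln_gt0 (leq_ltn_trans (leq0n _) (c_lt w0)) andbT.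
  by apply/card_gt0P; exists w0.
have Ga_le1 : #|G|%:R * a <= 1.
  rewrite -[leRHS](sum_walk m); apply: le_trans (ler_sum _ (fun x _ => minor x)).
  by rewrite sumr_const mulr_natl.
apply: (@exp_decay_of_contraction _ _ m (1 - #|G|%:R * a)) => //.
- by rewrite subr_ge0.
- by rewrite ltrBlDr ltrDl mulr_gt0 // ltr0n; apply/card_gt0P; exists 0.
- by move=> N; apply: sumr_ge0.
- move=> N M; have := @tvdist_contract N M 0 (lexx 0) (walk_ge0 M).
  by rewrite mulr0 subr0 mul1r.
- by move=> N; apply: tvdist_contract => //; apply: ltW.
Qed.

End RandomWalk.

(* MathComp does not declare the finite abelian group structure of [{ffun I -> G}]. *)
HB.instance Definition _ (I : finType) (G : finZmodType) := Finite.on {ffun I -> G}.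

Lemma natr_eq_ffun (I : finType) (T : eqType) (F : comNzRingType)
    (f g : {ffun I -> T}) :
  ((f == g)%:R : F) = \prod_i ((f i == g i)%:R : F).
Proof.
have [<-|/eqP neq_fg] := eqVneq f g; first by rewrite big1 // => i _; rewrite eqxx.
have [i neq_i|eq_fg] := pickP (fun i => f i != g i).
  by rewrite (bigD1 i) //= (negbTE neq_i) mul0r.
by case: neq_fg; apply/ffunP => i; apply/eqP/negPn; rewrite eq_fg.
Qed.

Section FpInterpolation.
Variables (p n : nat).
Hypothesis p_pr : prime p.
Local Notation F := 'F_p.
Local Notation point := {ffun 'I_n -> F}.
Local Notation exponent := {ffun 'I_n -> 'I_p}.

Lemma Fp_fermat (z : F) : z != 0 -> z ^+ p.-1 = 1.
Proof.
move=> z_neq0; apply: (mulfI z_neq0); rewrite mulr1 -exprS prednK ?prime_gt0 //.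
by rewrite -[in RHS](expf_card z) card_Fp.
Qed.

Lemma Fp_eq_indicator (a t : F) : ((a == t)%:R : F) = 1 - (t - a) ^+ p.-1.
Proof.
have [<-|neq_at] := eqVneq a t.
  have p1_gt0 : (0 < p.-1)%N by rewrite -ltnS prednK ?prime_gt1 ?prime_gt0.
  by rewrite subrr expr0n eqn0Ngt p1_gt0 subr0.
by rewrite Fp_fermat ?subrr // subr_eq0 eq_sym.
Qed.

(* Coefficients of [1 - (t - a)^(p-1)] as a polynomial in [t]. *)
Definition indicator_coef (a : F) (k : nat) : F :=
  (k == 0%N)%:R - (- a) ^+ (p.-1 - k) *+ 'C(p.-1, k).

Lemma Fp_eq_indicator_poly (a t : F) :
  ((a == t)%:R : F) = \sum_(k < p) indicator_coef a k * t ^+ k.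
Proof.
rewrite Fp_eq_indicator -(big_mkord xpredT (fun k => indicator_coef a k * t ^+ k)).
rewrite -[p in index_iota 0 p](prednK (prime_gt0 p_pr)) big_mkord (addrC t) exprDn.
under [RHS]eq_bigr do rewrite /indicator_coef mulrBl mulrnAl.
rewrite sumrB; congr (_ - _).
by rewrite big_ord_recl /= mul1r expr0 big1 ?addr0 // => i _; rewrite mul0r.
Qed.

Definition monomial (y : point) (k : exponent) : F := \prod_i y i ^+ (k i : nat).
Definition lagrange_coef (x : point) (k : exponent) : F :=
  \prod_i indicator_coef (x i) (k i).

Lemma eq_point_indicator (x y : point) :
  ((x == y)%:R : F) = \sum_k lagrange_coef x k * monomial y k.
Proof.
rewrite natr_eq_ffun; under eq_bigr do rewrite Fp_eq_indicator_poly.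
rewrite bigA_distr_bigA /=; apply: eq_bigr => k _.
by rewrite -big_split.
Qed.

Definition moments (c : {ffun point -> F}) : {ffun exponent -> F} :=
  [ffun k => \sum_y c y * monomial y k].

Lemma moments_inversion (c : {ffun point -> F}) (x : point) :
  c x = \sum_k lagrange_coef x k * moments c k.
Proof.
under eq_bigr do rewrite ffunE mulr_sumr.
rewrite exchange_big /= (bigD1 x) //= [X in _ + X]big1 ?addr0 => [|y neq_yx].
  have := eq_point_indicator x x; rewrite eqxx /= mulr1n => one_x.
  rewrite -[LHS]mulr1 one_x mulr_sumr.
  by apply: eq_bigr => k _; rewrite mulrCA.
under eq_bigr do rewrite mulrCA.
by rewrite -mulr_sumr -eq_point_indicator eq_sym (negbTE neq_yx) mulr0.
Qed.

Lemma moments_bij : bijective moments.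
Proof.
have moments_inj : injective moments.
  move=> c c' eq_cc'; apply/ffunP => x.
  by rewrite moments_inversion eq_cc' -moments_inversion.
apply: inj_card_bij moments_inj _.
by rewrite !card_ffun !card_ord (Fp_cast p_pr).
Qed.

Definition monomial_vec (y : point) : {ffun kidx n p -> F} :=
  [ffun k => monomial y (val k)].

Lemma monomial_vec0 : monomial_vec 0 = 0.
Proof.
apply/ffunP => k; rewrite !ffunE /monomial.
have /existsP [i k_i] := valP k.
by rewrite (bigD1 i) //= ffunE expr0n (negbTE k_i) mul0r.
Qed.

Lemma monomial_vec_span : nat_span_below monomial_vec p.
Proof.
move=> x; pose w : {ffun exponent -> F} :=
  [ffun k => if insub k is Some k' then x k' else 0].
have [g _ gK] := moments_bij.
exists (fun y => (g w y : nat)); split.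
  by move=> y; rewrite -[X in (_ < X)%N](Fp_cast p_pr) ltn_ord.
apply/ffunP => k; rewrite sum_ffunE.
under eq_bigr do rewrite ffunMnE ffunE -mulr_natr natr_Zp mulrC.
have := congr1 (fun f : {ffun exponent -> F} => f (val k)) (gK w).
by rewrite ffunE /w ffunE valK => ->.
Qed.

End FpInterpolation.

Section MomentWalk.
Variables (R : realType) (p n : nat).
Local Notation point := {ffun 'I_n -> 'F_p}.
Local Notation moment_space := {ffun kidx n p -> 'F_p}.

Lemma Xvec_sum_columns N (r : inputs p n N) :
  Xvec r = \sum_j monomial_vec [ffun i => r i j].
Proof.
apply/ffunP => k; rewrite sum_ffunE ffunE; apply: eq_bigr => j _.
by rewrite ffunE /monomial; apply: eq_bigr => i _; rewrite ffunE.
Qed.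

Definition append_column N (ry : inputs p n N * point) : inputs p n N.+1 :=
  [ffun i => [ffun j => if unlift ord_max j is Some j' then ry.1 i j' else ry.2 i]].

Definition split_last_column N (r : inputs p n N.+1) : inputs p n N * point :=
  ([ffun i => [ffun j => r i (lift ord_max j)]], [ffun i => r i ord_max]).

Lemma append_columnK N : cancel (@append_column N) (@split_last_column N).
Proof.
case=> r y; congr (_, _); apply/ffunP => i; rewrite !ffunE ?unlift_none //.
by apply/ffunP => j; rewrite !ffunE liftK.
Qed.

Lemma split_last_columnK N : cancel (@split_last_column N) (@append_column N).
Proof.
move=> r; apply/ffunP => i; apply/ffunP => j; rewrite !ffunE.
by case: unliftP => [j' ->|->] //=; rewrite ffunE.
Qed.

Lemma Xvec_append_column N (ry : inputs p n N * point) :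
  Xvec (append_column ry) = Xvec ry.1 + monomial_vec ry.2.
Proof.
rewrite !Xvec_sum_columns big_ord_recr /=; congr (_ + monomial_vec _).
  apply: eq_bigr => j _; congr monomial_vec; apply/ffunP => i; rewrite !ffunE.
  have -> : widen_ord (leqnSn N) j = lift ord_max j.
    by apply: val_inj; rewrite /= /bump leqNgt ltn_ord.
  by rewrite liftK.
by apply/ffunP => i; rewrite !ffunE unlift_none.
Qed.

Lemma card_Xvec_preim N (x : moment_space) :
  #|[set r : inputs p n N | Xvec r == x]| =
  (\sum_(r : inputs p n N) (Xvec r == x))%N.
Proof.
rewrite -sum1_card big_mkcond /=; apply: eq_bigr => r _.
by rewrite inE; case: (_ == _).
Qed.

Lemma card_Xvec_preimS N (x : moment_space) :
  #|[set r : inputs p n N.+1 | Xvec r == x]| =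
  (\sum_(y : point)
     #|[set r : inputs p n N | Xvec r == (x - monomial_vec y)%R]|)%N.
Proof.
rewrite card_Xvec_preim (reindex (@append_column N)); last first.
  by exists (@split_last_column N) => ? _; rewrite ?append_columnK ?split_last_columnK.
under eq_bigr do rewrite Xvec_append_column.
rewrite -(pair_bigA _ (fun r y => nat_of_bool (Xvec r + monomial_vec y == x))) /=.
rewrite exchange_big.
apply: eq_bigr => y _; rewrite card_Xvec_preim; apply: eq_bigr => r _.
by rewrite [X in _ = nat_of_bool X]eq_sym subr_eq eq_sym.
Qed.

Lemma distP_walk N (x : moment_space) : distP R N x = walk R (@monomial_vec p n) N x.
Proof.
have card_inputs M : #|{: inputs p n M}| = (#|{: point}| ^ M)%N.
  by rewrite !card_ffun !card_ord -!expnM mulnC.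
rewrite /distP card_inputs; elim: N x => [|N IH] x /=.
  rewrite card_Xvec_preim expn0 divr1.
  under eq_bigr do rewrite Xvec_sum_columns big_ord0 eq_sym.
  by rewrite sum_nat_const card_inputs expn0 mul1n.
rewrite card_Xvec_preimS natr_sum expnSr natrM invfM mulrA mulr_suml.
by congr (_ / _); apply: eq_bigr => y _; rewrite IH.
Qed.

Lemma l1dist_PU_tvdist N : l1dist_PU R p n N = tvdist R (@monomial_vec p n) N.
Proof.
by apply: eq_bigr => x _; rewrite distP_walk /distU div1r.
Qed.

End MomentWalk.

Theorem proposition2p9 (R : realType) (p n : nat) (hp : prime p) (hn : (1 <= n)%N) :
  exists c : R, 0 < c /\
  exists N0 : nat, forall N : nat, (N0 <= N)%N ->
    l1dist_PU R p n N <= expR (- (c * N%:R)).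
Proof.
have [c [c_gt0 [N0 decay]]] :=
  tvdist_exp_decay R (monomial_vec0 p n) (monomial_vec_span hp).
by exists c; split => //; exists N0 => N /decay; rewrite l1dist_PU_tvdist.
Qed.
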